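(* Let $\sigma:\mathbb{R}\to\mathbb{R}$ be an increasing odd homeomorphism. If $A\subset\mathbb{R}^2$ is invariant under $h_\sigma$ and $v_\sigma$ (i.e. $h_\sigma^{\pm1}(A)\subset A$ and $v_\sigma^{\pm1}(A)\subset A$), then $A_+=A\cap\mathbb{R}_{\geq0}^2$ satisfies $E_\sigma^{-1}(A_+)=A_+$.
   Context: $h_\sigma(x,y)=(x+\sigma^{-1}(y),y)$, $v_\sigma(x,y)=(x,\sigma(x)+y)$. The generalized Euclidean algorithm is $E_\sigma:\mathbb{R}_{\geq0}^2\to\mathbb{R}_{\geq0}^2$, $E_\sigma(x,y)=(x-\sigma^{-1}(y),y)$ if $y<\sigma(x)$ and $E_\sigma(x,y)=(x,y-\sigma(x))$ if $y\geq\sigma(x)$. *)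

From Stdlib Require Import Reals.
Open Scope R_scope.

Definition increasing_odd_homeo (sigma sinv : R -> R) : Prop :=
  (forall x y, x < y -> sigma x < sigma y) /\
  (forall x, sigma (- x) = - sigma x) /\
  (forall x, continuity_pt sigma x) /\
  (forall x, continuity_pt sinv x) /\
  (forall x, sinv (sigma x) = x) /\
  (forall y, sigma (sinv y) = y).

Definition h_sig (sigma sinv : R -> R) (p : R * R) : R * R :=
  (fst p + sinv (snd p), snd p).
Definition h_sig_inv (sigma sinv : R -> R) (p : R * R) : R * R :=
  (fst p - sinv (snd p), snd p).
Definition v_sig (sigma sinv : R -> R) (p : R * R) : R * R :=
  (fst p, sigma (fst p) + snd p).
Definition v_sig_inv (sigma sinv : R -> R) (p : R * R) : R * R :=
  (fst p, snd p - sigma (fst p)).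

(* Generalized Euclidean algorithm on R_{>=0}^2 (given as a total formula). *)
Definition E_sig (sigma sinv : R -> R) (p : R * R) : R * R :=
  let (x, y) := p in
  if Rlt_dec y (sigma x) then (x - sinv y, y) else (x, y - sigma x).

Definition quadrant (p : R * R) : Prop := 0 <= fst p /\ 0 <= snd p.

Definition maps_into (f : R * R -> R * R) (A : R * R -> Prop) : Prop :=
  forall p, A p -> A (f p).

Definition A_plus (A : R * R -> Prop) (p : R * R) : Prop := A p /\ quadrant p.

From Stdlib Require Import Reals Lra.
Open Scope R_scope.

(* Proof idea: on each of its two branches E_sigma acts as h_sigma^{-1} or
   v_sigma^{-1}, whose inverses also preserve A, so p lies in A exactly when
   E_sigma p does; and both branches keep points of the closed quadrant in it. *)

Lemma maps_into_iff (f g : R * R -> R * R) (A : R * R -> Prop) :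
  (forall p, g (f p) = p) -> maps_into f A -> maps_into g A ->
  forall p, A (f p) <-> A p.
Proof.
  intros gfK Hf Hg p; split; intros Hp.
  - rewrite <- (gfK p); exact (Hg _ Hp).
  - exact (Hf _ Hp).
Qed.

Lemma h_sig_invK (sigma sinv : R -> R) (p : R * R) :
  h_sig sigma sinv (h_sig_inv sigma sinv p) = p.
Proof. destruct p as [x y]; unfold h_sig, h_sig_inv; simpl; f_equal; ring. Qed.

Lemma v_sig_invK (sigma sinv : R -> R) (p : R * R) :
  v_sig sigma sinv (v_sig_inv sigma sinv p) = p.
Proof. destruct p as [x y]; unfold v_sig, v_sig_inv; simpl; f_equal; ring. Qed.

Lemma E_sig_cases (sigma sinv : R -> R) (p : R * R) :
  E_sig sigma sinv p = h_sig_inv sigma sinv p \/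
  E_sig sigma sinv p = v_sig_inv sigma sinv p.
Proof.
  destruct p as [x y]; unfold E_sig.
  destruct (Rlt_dec y (sigma x)); [left | right]; reflexivity.
Qed.

Lemma lt_sigma_sinv_lt (sigma sinv : R -> R) (x y : R) :
  (forall a b, a < b -> sigma a < sigma b) ->
  (forall b, sigma (sinv b) = b) ->
  y < sigma x -> sinv y < x.
Proof.
  intros sigma_lt sinvK Hyx.
  destruct (Rlt_or_le (sinv y) x) as [Hlt | [Hgt | Heq]]; [exact Hlt | | ].
  - apply sigma_lt in Hgt; rewrite sinvK in Hgt; lra.
  - rewrite Heq, sinvK in Hyx; lra.
Qed.

Lemma quadrant_E_sig (sigma sinv : R -> R) (p : R * R) :
  (forall a b, a < b -> sigma a < sigma b) ->
  (forall b, sigma (sinv b) = b) ->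
  quadrant p -> quadrant (E_sig sigma sinv p).
Proof.
  intros sigma_lt sinvK; destruct p as [x y]; unfold quadrant, E_sig; simpl.
  intros [Hx Hy]; destruct (Rlt_dec y (sigma x)) as [Hyx | Hyx]; simpl.
  - pose proof (lt_sigma_sinv_lt sigma sinv x y sigma_lt sinvK Hyx); lra.
  - lra.
Qed.

Theorem lemma9 (sigma sinv : R -> R) (A : R * R -> Prop) :
  increasing_odd_homeo sigma sinv ->
  maps_into (h_sig sigma sinv) A ->
  maps_into (h_sig_inv sigma sinv) A ->
  maps_into (v_sig sigma sinv) A ->
  maps_into (v_sig_inv sigma sinv) A ->
  forall p : R * R,
    (quadrant p /\ A_plus A (E_sig sigma sinv p)) <-> A_plus A p.
Proof.
  intros [sigma_lt [_ [_ [_ [_ sinvK]]]]] Hh Hh_inv Hv Hv_inv p.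
  assert (A_E : A (E_sig sigma sinv p) <-> A p).
  { destruct (E_sig_cases sigma sinv p) as [-> | ->].
    - exact (maps_into_iff _ _ A (h_sig_invK sigma sinv) Hh_inv Hh p).
    - exact (maps_into_iff _ _ A (v_sig_invK sigma sinv) Hv_inv Hv p). }
  unfold A_plus; split.
  - intros [Hq [HA _]]; split; [apply A_E; exact HA | exact Hq].
  - intros [HA Hq]; split; [exact Hq | split].
    + apply A_E; exact HA.
    + exact (quadrant_E_sig sigma sinv p sigma_lt sinvK Hq).
Qed.
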